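(* In the between-ride routing problem described in the context (with the standing assumptions there), there exists an optimal stationary policy $\mu^*$ such that (i) for every $i\in N$, $\mu^*_1(i)=i$ implies $\mu^*_2(i)=\infty$, and (ii) $\mu^*$ has no cycles with probability 1: for every starting node, every $i\in N$ and all distinct stages $k\neq k'$, $\mathbb{P}(x_k=i,\,x_{k'}=i)=0$. Equivalently, the successor map $i\mapsto \mu^*_1(i)$ on $N$ has no directed cycle through two or more distinct nodes, and every self-loop of it is an indefinite wait. In particular, under $\mu^*$ every node is visited at most once, so the process reaches $m$ within at most $n$ decision stages (counting a final indefinite wait or quit as a stage).
   Context: Road network: a directed, connected graph $G=(N,E)$ with $|N|=n$, containing every loop $(i,i)$, $i\in N$. Constants: wage rate $w>0$ and fuel/vehicle cost per unit distance $f>0$. Each edge $e\in E$ has a ride-request rate $Q_e>0$ and expected ride profit $R_e>0$; each non-loop edge $e=(i,j)$, $j\neq i$, has a traversal time $T_e>0$ and speed $S_e>0$; loops have $S_{(i,i)}=0$. Markov decision problem: the state space is $X=N\cup\{m\}$, where $m$ is an absorbing terminal state (ride found or driver quits) with zero reward. At $i\in N$ an action is a pair $u=(u_1,u_2)$ with $u_1\in\{j:(i,j)\in E\}\cup\{m\}$; if $u_1=i$ (waiting) then $u_2=t\in(0,\infty]$ is freely chosen; if $u_1=j\neq i$ then $u_2=t=T_{(i,j)}$. For $u_1=j\in N$ and $e=(i,j)$: the next state is $m$ with probability $1-e^{-tQ_e}$ and $j$ with probability $e^{-tQ_e}$, and the expected stage reward is $g(i,u)=(1-e^{-tQ_e})\bigl(R_e-\frac{w+fS_e}{Q_e}\bigr)$;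 for $t=\infty$ these quantities are defined as the limits as $t\to\infty$ (so waiting forever at $i$ yields reward $R_{(i,i)}-w/Q_{(i,i)}$ and moves to $m$ with probability 1). For $u_1=m$ (quitting) the next state is $m$ with probability 1 and the reward is $0$. A policy prescribes an action for each state at each stage; it is stationary if the same map $\mu:i\mapsto(\mu_1(i),\mu_2(i))$ is used at every stage. The value of a policy $\pi$ from $x_0$ is $J_\pi(x_0)=\lim_{K\to\infty}\mathbb{E}\bigl[\sum_{k=0}^{K-1} g(x_k,\pi_k(x_k))\bigr]$; a policy is optimal if it attains $J^*(x)=\sup_\pi J_\pi(x)$ for every $x\in N$. $x_k$ denotes the state at stage $k$. Standing assumption: for every non-loop edge $e=(j,k)$, $R_e-\frac{w}{Q_e}\le\max_{i\in\{j,k\}}\bigl\{R_{(i,i)}-\frac{w}{Q_{(i,i)}}\bigr\}$. *)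

From Stdlib Require Import Reals List Relations.
Open Scope R_scope.

(* Nodes are the naturals 0..n-1; the terminal state m is [None] in [option nat].
   Edge data Q R T S are functions nat -> nat -> R, read at e = (i,j). *)

(* An action u = (u1,u2): u1 = None means "quit" (go to m), u1 = Some j means
   "go to j" (j = i: wait); u2 = None means t = infinity, u2 = Some t a finite t. *)
Definition action : Type := (option nat * option R)%type.

Definition policy : Type := nat -> nat -> action.

Definition adm (E : nat -> nat -> Prop) (T : nat -> nat -> R) (i : nat) (u : action) : Prop :=
  match fst u with
  | None => True
  | Some j =>
      E i j /\
      (if Nat.eq_dec j i
       then match snd u with None => True | Some t => 0 < t end
       else snd u = Some (T i j))
  end.

Definition admissible (n : nat) (E : nat -> nat -> Prop) (T : nat -> nat -> R)
  (pi : policy) : Prop :=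
  forall k i, (i < n)%nat -> adm E T i (pi k i).

(* probability 1 - e^{-t Q_e} of moving to m (limit 1 when t = infinity) *)
Definition pm (Q : nat -> nat -> R) (i : nat) (u : action) : R :=
  match u with
  | (None, _) => 1
  | (Some _, None) => 1
  | (Some j, Some t) => 1 - exp (- (t * Q i j))
  end.

Definition trans (Q : nat -> nat -> R) (i : nat) (u : action) (y : option nat) : R :=
  match fst u with
  | None => match y with None => 1 | Some _ => 0 end
  | Some j =>
      match y with
      | None => pm Q i u
      | Some y' => if Nat.eq_dec y' j then 1 - pm Q i u else 0
      end
  end.

Definition reward (w f : R) (Q Rw S : nat -> nat -> R) (i : nat) (u : action) : R :=
  match fst u with
  | None => 0
  | Some j => pm Q i u * (Rw i j - (w + f * S i j) / Q i j)
  end.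

Definition sumN (n : nat) (F : nat -> R) : R := fold_right Rplus 0 (map F (seq 0 n)).

Definition step (n : nat) (Q : nat -> nat -> R) (a : nat -> action)
  (d : option nat -> R) : option nat -> R :=
  fun y =>
    match y with
    | None => d None + sumN n (fun i => d (Some i) * trans Q i (a i) None)
    | Some j => sumN n (fun i => d (Some i) * trans Q i (a i) (Some j))
    end.

Definition ind_node (x : nat) (y : option nat) : R :=
  match y with Some y' => if Nat.eq_dec y' x then 1 else 0 | None => 0 end.

(* Weighted (path-summed) measure at stage k: sum over all trajectories
   x_0 = x0, x_1, ..., x_k of the trajectory probability times
   h 0 x_0 * ... * h k x_k, as a function of x_k. *)
Fixpoint wdist (n : nat) (Q : nat -> nat -> R) (pi : policy) (x0 : nat)
  (h : nat -> option nat -> R) (k : nat) : option nat -> R :=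
  match k with
  | O => fun y => ind_node x0 y * h O y
  | S k' => fun y => step n Q (pi k') (wdist n Q pi x0 h k') y * h k y
  end.

Definition mass (n : nat) (d : option nat -> R) : R := d None + sumN n (fun i => d (Some i)).

Definition state_dist n Q pi x0 k : option nat -> R := wdist n Q pi x0 (fun _ _ => 1) k.

(* P(x_k = i, x_k' = i) from x_0 = x0 *)
Definition prob_both (n : nat) (Q : nat -> nat -> R) (pi : policy) (x0 i k k' : nat) : R :=
  mass n (wdist n Q pi x0
            (fun s y => if (Nat.eqb s k || Nat.eqb s k')%bool then ind_node i y else 1)
            (Nat.max k k')).

(* E[ sum_{k<K} g(x_k, pi_k(x_k)) ]  (m has zero reward) *)
Definition partial_value (n : nat) (w f : R) (Q Rw S : nat -> nat -> R)
  (pi : policy) (x0 K : nat) : R :=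
  sumN K (fun k => sumN n (fun i => state_dist n Q pi x0 k (Some i) * reward w f Q Rw S i (pi k i))).

Definition value_is n w f Q Rw S pi x0 (v : R) : Prop :=
  Un_cv (partial_value n w f Q Rw S pi x0) v.

Definition stat (mu : nat -> action) : policy := fun _ => mu.

Definition optimal_stationary n (E : nat -> nat -> Prop) w f (Q Rw T S : nat -> nat -> R)
  (mu : nat -> action) : Prop :=
  admissible n E T (stat mu) /\
  forall x0, (x0 < n)%nat ->
    exists v, value_is n w f Q Rw S (stat mu) x0 v /\
      forall (pi : policy) v', admissible n E T pi ->
        value_is n w f Q Rw S pi x0 v' -> v' <= v.

From Stdlib Require Import Reals List Relations Lia Lra Classical.
Open Scope R_scope.

(* Settle the nodes one at a time, in decreasing order of value, as in Dijkstra's algorithm: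
   among the unsettled nodes pick the one whose best action (quit, wait forever, or move to an
   already settled neighbour) is largest, and freeze that value.  The standing assumption makes
   a move towards a node settled later no better than waiting at one of its ends, so the frozen
   values V satisfy Bellman's inequality for every admissible action (a finite wait is a convex
   combination of waiting forever and of staying put), with equality along the chosen stationary
   policy mu.  Every move of mu goes to a node settled earlier, so mu strictly decreases a rank
   bounded by n: no node is visited twice and m is reached within n stages.  Telescoping
   "collected reward + expected value of V at the current state" then gives J_mu = V >= J_pi. *)

Lemma sumN_S m F : sumN (S m) F = sumN m F + F m.
Proof.
  unfold sumN. rewrite seq_S, map_app, fold_right_app; simpl.
  generalize (F m); induction (map F (seq 0 m)) as [|a l IH]; intro x; simpl; [ring|].
  rewrite IH; ring.
Qed.

Lemma sumN_ext m F G : (forall i, (i < m)%nat -> F i = G i) -> sumN m F = sumN m G.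
Proof. induction m; intros H; [reflexivity|]. rewrite !sumN_S, IHm, H; auto. Qed.

Lemma sumN_le m F G : (forall i, (i < m)%nat -> F i <= G i) -> sumN m F <= sumN m G.
Proof.
  induction m; intros H; [unfold sumN; simpl; lra|]. rewrite !sumN_S.
  assert (F m <= G m) by auto. assert (sumN m F <= sumN m G) by auto. lra.
Qed.

Lemma sumN_eq0 m F : (forall i, (i < m)%nat -> F i = 0) -> sumN m F = 0.
Proof. induction m; intros H; [reflexivity|]. rewrite sumN_S, IHm, H; auto; ring. Qed.

Lemma sumN_ge0 m F : (forall i, (i < m)%nat -> 0 <= F i) -> 0 <= sumN m F.
Proof.
  intros H. rewrite <- (sumN_eq0 m (fun _ => 0)) by reflexivity. now apply sumN_le.
Qed.

Lemma sumN_neq0 m F : sumN m F <> 0 -> exists i, (i < m)%nat /\ F i <> 0.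
Proof.
  intros H. apply NNPP. intro C. apply H, sumN_eq0.
  intros i Hi. apply NNPP. eauto.
Qed.

Lemma sumN_add m F G : sumN m (fun i => F i + G i) = sumN m F + sumN m G.
Proof. induction m; [unfold sumN; simpl; ring|]. rewrite !sumN_S, IHm. ring. Qed.

Lemma sumN_mulr m F c : sumN m F * c = sumN m (fun i => F i * c).
Proof. induction m; [unfold sumN; simpl; ring|]. rewrite !sumN_S, <- IHm. ring. Qed.

Lemma sumN_mull m F c : c * sumN m F = sumN m (fun i => c * F i).
Proof. induction m; [unfold sumN; simpl; ring|]. rewrite !sumN_S, <- IHm. ring. Qed.

Lemma sumN_exchange a b (F : nat -> nat -> R) :
  sumN a (fun i => sumN b (F i)) = sumN b (fun j => sumN a (fun i => F i j)).
Proof.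
  induction a.
  - symmetry. now apply sumN_eq0.
  - rewrite sumN_S, IHa, <- sumN_add. apply sumN_ext. intros. now rewrite sumN_S.
Qed.

Lemma sumN_delta m c (G : nat -> R) : (c < m)%nat ->
  sumN m (fun i => if Nat.eq_dec i c then G i else 0) = G c.
Proof.
  induction m; intros H; [lia|]. rewrite sumN_S.
  destruct (Nat.eq_dec m c) as [<-|Hne].
  - rewrite sumN_eq0; [ring|]. intros i Hi. destruct (Nat.eq_dec i m); [lia|auto].
  - rewrite IHm by lia. ring.
Qed.

Lemma Un_cv_eventually_const (u : nat -> R) l N :
  (forall K, (N <= K)%nat -> u K = l) -> Un_cv u l.
Proof.
  intros Hu eps Heps. exists N. intros K HK. unfold R_dist.
  rewrite Hu, Rminus_diag, Rabs_R0 by exact HK. exact Heps.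
Qed.

Lemma one_minus_exp_neg_bounds x : 0 <= x -> 0 <= 1 - exp (- x) <= 1.
Proof.
  intros Hx. pose proof (exp_pos (- x)). pose proof (exp_ineq1_le x).
  rewrite exp_Ropp in *. assert (/ exp x <= 1).
  { rewrite <- Rinv_1. apply Rinv_le_contravar; lra. }
  lra.
Qed.

Lemma trans_ge0 Q i u y : 0 <= trans Q i u (Some y).
Proof.
  destruct u as [[j|] [t|]]; unfold trans, pm; simpl; try lra;
    destruct (Nat.eq_dec y j); try lra.
  pose proof (exp_pos (- (t * Q i j))). lra.
Qed.

Section Evaluation.
Variables (n : nat) (E : nat -> nat -> Prop) (w f : R) (Q Rw T Sp : nat -> nat -> R).

Definition qfactor (V : nat -> R) (i : nat) (u : action) : R :=
  reward w f Q Rw Sp i u + match fst u with Some j => (1 - pm Q i u) * V j | None => 0 end.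

Lemma qfactor_quit V i t : qfactor V i (None, t) = 0.
Proof. unfold qfactor, reward; simpl. ring. Qed.

Definition expected_value (pi : policy) (x0 : nat) (V : nat -> R) (k : nat) : R :=
  sumN n (fun i => state_dist n Q pi x0 k (Some i) * V i).

Lemma state_dist_S pi x0 k j : state_dist n Q pi x0 (S k) (Some j) =
  sumN n (fun i => state_dist n Q pi x0 k (Some i) * trans Q i (pi k i) (Some j)).
Proof. unfold state_dist; simpl. ring. Qed.

Lemma state_dist_ge0 pi x0 k i : 0 <= state_dist n Q pi x0 k (Some i).
Proof.
  revert i; induction k; intros i.
  - unfold state_dist; simpl. destruct (Nat.eq_dec i x0); lra.
  - rewrite state_dist_S. apply sumN_ge0. intros j _.
    apply Rmult_le_pos; [auto | apply trans_ge0].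
Qed.

Lemma expected_value_0 pi x0 V : (x0 < n)%nat -> expected_value pi x0 V 0 = V x0.
Proof.
  intros Hx. unfold expected_value, state_dist; simpl.
  rewrite <- (sumN_delta n x0 V Hx). apply sumN_ext. intros i _.
  destruct (Nat.eq_dec i x0); ring.
Qed.

Lemma sumN_trans_value V i u : (forall j, fst u = Some j -> (j < n)%nat) ->
  sumN n (fun y => trans Q i u (Some y) * V y) = qfactor V i u - reward w f Q Rw Sp i u.
Proof.
  intros Hu. unfold qfactor. destruct u as [[j|] t]; unfold trans; cbn [fst].
  - rewrite Rplus_minus_l, <- (sumN_delta n j (fun y => (1 - pm Q i (Some j, t)) * V y)) by auto.
    apply sumN_ext. intros y _. destruct (Nat.eq_dec y j); ring.
  - rewrite sumN_eq0; [ring | intros; ring].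
Qed.

Hypothesis hE_dom : forall i j, E i j -> (i < n)%nat /\ (j < n)%nat.

Lemma partial_value_expected_S pi x0 V K : admissible n E T pi ->
  partial_value n w f Q Rw Sp pi x0 (S K) + expected_value pi x0 V (S K) =
  partial_value n w f Q Rw Sp pi x0 K + expected_value pi x0 V K +
  sumN n (fun i => state_dist n Q pi x0 K (Some i) * (qfactor V i (pi K i) - V i)).
Proof.
  intros Hadm.
  assert (Hnext : expected_value pi x0 V (S K) =
    sumN n (fun i => state_dist n Q pi x0 K (Some i) *
                     (qfactor V i (pi K i) - reward w f Q Rw Sp i (pi K i)))).
  { unfold expected_value.
    rewrite (sumN_ext _ _ (fun j => sumN n (fun i =>
      state_dist n Q pi x0 K (Some i) * (trans Q i (pi K i) (Some j) * V j)))).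
    2:{ intros j _. rewrite state_dist_S, sumN_mulr. apply sumN_ext. intros; ring. }
    rewrite <- sumN_exchange. apply sumN_ext. intros i Hi.
    rewrite <- sumN_mull, sumN_trans_value; [reflexivity|].
    intros j Hj. specialize (Hadm K i Hi). unfold adm in Hadm. rewrite Hj in Hadm.
    apply (hE_dom i j), Hadm. }
  unfold partial_value at 1. rewrite sumN_S, Hnext. fold (partial_value n w f Q Rw Sp pi x0 K).
  rewrite !Rplus_assoc. f_equal.
  unfold expected_value. rewrite <- !sumN_add. apply sumN_ext. intros; ring.
Qed.

Lemma partial_value_le_superharmonic pi x0 V : (x0 < n)%nat -> admissible n E T pi ->
  (forall k i, (i < n)%nat -> qfactor V i (pi k i) <= V i) ->
  forall K, partial_value n w f Q Rw Sp pi x0 K + expected_value pi x0 V K <= V x0.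
Proof.
  intros Hx Hadm Hsup. induction K.
  - rewrite expected_value_0 by exact Hx. unfold partial_value, sumN; simpl. lra.
  - rewrite partial_value_expected_S by exact Hadm.
    assert (sumN n (fun i => state_dist n Q pi x0 K (Some i) * (qfactor V i (pi K i) - V i)) <= 0).
    { rewrite <- (sumN_eq0 n (fun _ => 0)) by reflexivity. apply sumN_le. intros i Hi.
      rewrite <- (Rmult_0_r (state_dist n Q pi x0 K (Some i))).
      apply Rmult_le_compat_l; [apply state_dist_ge0 | specialize (Hsup K i Hi); lra]. }
    lra.
Qed.

Lemma partial_value_eq_harmonic pi x0 V : (x0 < n)%nat -> admissible n E T pi ->
  (forall k i, (i < n)%nat -> qfactor V i (pi k i) = V i) ->
  forall K, partial_value n w f Q Rw Sp pi x0 K + expected_value pi x0 V K = V x0.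
Proof.
  intros Hx Hadm Hharm. induction K.
  - rewrite expected_value_0 by exact Hx. unfold partial_value, sumN; simpl. lra.
  - rewrite partial_value_expected_S, sumN_eq0 by (auto; intros i Hi; rewrite Hharm; auto; ring).
    lra.
Qed.

Lemma optimal_of_bellman V mu : admissible n E T (stat mu) ->
  (forall i, (i < n)%nat -> qfactor V i (mu i) = V i) ->
  (forall i u, (i < n)%nat -> adm E T i u -> qfactor V i u <= V i) ->
  (forall x0 K i, (x0 < n)%nat -> (n <= K)%nat -> state_dist n Q (stat mu) x0 K (Some i) = 0) ->
  optimal_stationary n E w f Q Rw T Sp mu.
Proof.
  intros Hadm Hharm Hsup Hfinite. split; [exact Hadm|]. intros x0 Hx. exists (V x0). split.
  - apply (Un_cv_eventually_const _ _ n). intros K HK.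
    rewrite <- (partial_value_eq_harmonic (stat mu) x0 V Hx Hadm (fun k => Hharm) K).
    unfold expected_value. rewrite sumN_eq0; [ring|]. intros i Hi. rewrite Hfinite; auto. ring.
  - intros pi v Hpi Hv.
    apply (Rle_cv_lim (Un := partial_value n w f Q Rw Sp pi x0) (Vn := fun _ => V x0));
      [| exact Hv |].
    + intros K. pose proof (partial_value_le_superharmonic pi x0 V Hx Hpi
                              (fun k i Hi => Hsup i _ Hi (Hpi k i Hi)) K).
      assert (0 <= expected_value pi x0 V K); [|lra].
      apply sumN_ge0. intros i Hi. apply Rmult_le_pos; [apply state_dist_ge0|].
      rewrite <- (qfactor_quit V i None). apply Hsup; [exact Hi | exact I].
    + now apply (Un_cv_eventually_const _ _ 0).
Qed.

End Evaluation.

Section Acyclic.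
Variables (n : nat) (Q : nat -> nat -> R) (mu : nat -> action) (rk : nat -> nat).
Hypothesis rank_desc :
  forall i y, (i < n)%nat -> trans Q i (mu i) (Some y) <> 0 -> (rk y < rk i)%nat.

Lemma wdist_neq0_weight x0 h s y : wdist n Q (stat mu) x0 h s y <> 0 -> h s y <> 0.
Proof. destruct s; simpl; intros H C; apply H; rewrite C; ring. Qed.

Lemma wdist_rank_decrease x0 h a z :
  (forall y, wdist n Q (stat mu) x0 h a (Some y) <> 0 -> y = z) ->
  forall d y, wdist n Q (stat mu) x0 h (a + d) (Some y) <> 0 -> (rk y + d <= rk z)%nat.
Proof.
  intros Hz d. induction d as [|d IH]; intros y Hy.
  - rewrite Nat.add_0_r in Hy. apply Hz in Hy as ->. lia.
  - rewrite Nat.add_succ_r in Hy. simpl in Hy.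
    assert (Hsum : sumN n (fun i => wdist n Q (stat mu) x0 h (a + d) (Some i) *
                                    trans Q i (stat mu (a + d)%nat i) (Some y)) <> 0)
      by (intro C; apply Hy; rewrite C; ring).
    apply sumN_neq0 in Hsum as [i [Hi Hne]].
    assert (Hw : wdist n Q (stat mu) x0 h (a + d) (Some i) <> 0)
      by (intro C; apply Hne; rewrite C; ring).
    assert (Ht : trans Q i (mu i) (Some y) <> 0)
      by (intro C; apply Hne; unfold stat; rewrite C; ring).
    apply IH in Hw. apply rank_desc in Ht; [lia | exact Hi].
Qed.

Lemma state_dist_vanishes x0 K y : (rk x0 < K)%nat -> state_dist n Q (stat mu) x0 K (Some y) = 0.
Proof.
  intros HK. apply NNPP. intro H.
  assert (Hx0 : forall y, state_dist n Q (stat mu) x0 0 (Some y) <> 0 -> y = x0).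
  { unfold state_dist; simpl. intros y' Hy'. destruct (Nat.eq_dec y' x0); [auto | lra]. }
  pose proof (wdist_rank_decrease x0 _ 0 x0 Hx0 K y H). lia.
Qed.

Lemma mass_wdist_eq0 x0 h a b i : (a < b)%nat ->
  (forall y, h a (Some y) <> 0 -> y = i) -> (forall y, h b (Some y) <> 0 -> y = i) ->
  h b None = 0 -> mass n (wdist n Q (stat mu) x0 h b) = 0.
Proof.
  intros Hab Ha Hb Hnone. unfold mass.
  assert (Hm : wdist n Q (stat mu) x0 h b None = 0).
  { apply NNPP; intro C. now apply wdist_neq0_weight in C. }
  rewrite Hm, sumN_eq0; [ring|]. intros y _. apply NNPP. intro C.
  assert (Hi : forall y, wdist n Q (stat mu) x0 h a (Some y) <> 0 -> y = i)
    by (intros y' Hy'; now apply wdist_neq0_weight, Ha in Hy').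
  replace b with (a + (b - a))%nat in C by lia.
  pose proof (wdist_rank_decrease x0 h a i Hi (b - a) y C).
  replace (a + (b - a))%nat with b in C by lia.
  apply wdist_neq0_weight, Hb in C. subst. lia.
Qed.

Lemma prob_both_eq0 x0 i k k' : k <> k' -> prob_both n Q (stat mu) x0 i k k' = 0.
Proof.
  intros Hkk. unfold prob_both.
  set (h := fun s y => if (Nat.eqb s k || Nat.eqb s k')%bool then ind_node i y else 1).
  assert (Hmarked : forall s, s = k \/ s = k' ->
            (forall y, h s (Some y) <> 0 -> y = i) /\ h s None = 0).
  { intros s Hs. unfold h.
    replace (Nat.eqb s k || Nat.eqb s k')%bool with true
      by (destruct Hs as [->| ->]; rewrite Nat.eqb_refl; [|rewrite Bool.orb_true_r]; reflexivity).
    split; [|reflexivity]. intros y. simpl. destruct (Nat.eq_dec y i); [auto | lra]. }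
  destruct (Nat.lt_gt_cases k k') as [[Hlt | Hgt] _]; [exact Hkk | |].
  - rewrite Nat.max_r by lia.
    destruct (Hmarked k) as [Hk _], (Hmarked k') as [Hk' Hn]; auto.
    apply (mass_wdist_eq0 _ _ k k' i); auto.
  - rewrite Nat.max_l by lia.
    destruct (Hmarked k') as [Hk' _], (Hmarked k) as [Hk Hn]; auto.
    apply (mass_wdist_eq0 _ _ k' k i); auto.
Qed.

End Acyclic.

Lemma exists_argmax_in {A : Type} (P : A -> Prop) (g : A -> R) (l : list A) :
  (exists a, In a l /\ P a) ->
  exists a, In a l /\ P a /\ forall b, In b l -> P b -> g b <= g a.
Proof.
  induction l as [|x l IH]; intros [a [Ha HPa]]; [destruct Ha|].
  destruct (classic (exists a, In a l /\ P a)) as [Hl | Hl].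
  - destruct (IH Hl) as [m [Hm [HPm Hmax]]].
    destruct (classic (P x /\ g m <= g x)) as [[HPx Hx] | Hx].
    + exists x. repeat split; [now left | exact HPx |].
      intros b [<- | Hb] HPb; [lra|]. specialize (Hmax b Hb HPb). lra.
    + exists m. repeat split; [now right | exact HPm |].
      intros b [<- | Hb] HPb; [|auto].
      apply Rnot_lt_le. intro C. apply Hx. split; [exact HPb | lra].
  - destruct Ha as [-> | Ha]; [| exfalso; eauto].
    exists a. repeat split; [now left | exact HPa |].
    intros b [<- | Hb] HPb; [lra | exfalso; eauto].
Qed.

Definition update {A : Type} (g : nat -> A) (u : nat) (a : A) (x : nat) : A :=
  if Nat.eq_dec x u then a else g x.

Lemma update_eq {A : Type} (g : nat -> A) u a : update g u a u = a.
Proof. unfold update. now destruct (Nat.eq_dec u u). Qed.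

Lemma update_neq {A : Type} (g : nat -> A) u a x : x <> u -> update g u a x = g x.
Proof. unfold update. now destruct (Nat.eq_dec x u). Qed.

Section Construction.
Variables (n : nat) (E : nat -> nat -> Prop) (w f : R) (Q Rw T Sp : nat -> nat -> R).
Hypotheses
  (hE_dom : forall i j, E i j -> (i < n)%nat /\ (j < n)%nat)
  (hE_loop : forall i, (i < n)%nat -> E i i)
  (hf : 0 < f)
  (hQ : forall i j, E i j -> 0 < Q i j)
  (hT : forall i j, E i j -> i <> j -> 0 < T i j)
  (hS : forall i j, E i j -> i <> j -> 0 < Sp i j)
  (hSloop : forall i, (i < n)%nat -> Sp i i = 0)
  (hstand : forall j k, E j k -> j <> k ->
     Rw j k - w / Q j k <= Rmax (Rw j j - w / Q j j) (Rw k k - w / Q k k)).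

Local Notation qf := (qfactor w f Q Rw Sp).

Definition wait_value (i : nat) : R := Rw i i - (w + f * Sp i i) / Q i i.

Lemma qfactor_wait_forever V i : qf V i (Some i, None) = wait_value i.
Proof. unfold qfactor, reward, pm, wait_value; simpl. ring. Qed.

Lemma qfactor_finite_wait_le V i t : (i < n)%nat -> 0 < t ->
  wait_value i <= V i -> qf V i (Some i, Some t) <= V i.
Proof.
  intros Hi Ht Hwait. unfold qfactor, reward, pm; simpl. fold (wait_value i).
  assert (Hp := one_minus_exp_neg_bounds (t * Q i i)
                  (Rlt_le _ _ (Rmult_lt_0_compat _ _ Ht (hQ i i (hE_loop i Hi))))).
  set (p := 1 - exp (- (t * Q i i))) in *.
  assert (p * wait_value i <= p * V i) by (apply Rmult_le_compat_l; lra).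
  lra.
Qed.

(* By the standing assumption, a ride picked up on the way from i to j is worth no more than
   one awaited at i or at j. *)
Lemma qfactor_move_le V i j X : E i j -> i <> j ->
  wait_value i <= X -> wait_value j <= X -> V j <= X -> qf V i (Some j, Some (T i j)) <= X.
Proof.
  intros Hij Hne Hi Hj HV.
  destruct (hE_dom _ _ Hij) as [Hin Hjn].
  assert (HQ := hQ _ _ Hij). assert (HT := hT _ _ Hij Hne). assert (HS := hS _ _ Hij Hne).
  unfold wait_value in Hi, Hj. rewrite hSloop, Rmult_0_r, Rplus_0_r in Hi, Hj by auto.
  assert (Hride : Rw i j - (w + f * Sp i j) / Q i j <= X).
  { assert (w / Q i j <= (w + f * Sp i j) / Q i j).
    { apply Rmult_le_compat_r; [left; now apply Rinv_0_lt_compat|].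
      assert (0 < f * Sp i j) by now apply Rmult_lt_0_compat. lra. }
    assert (Rmax (Rw i i - w / Q i i) (Rw j j - w / Q j j) <= X) by now apply Rmax_lub.
    pose proof (hstand _ _ Hij Hne). lra. }
  unfold qfactor, reward, pm; simpl.
  assert (Hp := one_minus_exp_neg_bounds (T i j * Q i j)
                  (Rlt_le _ _ (Rmult_lt_0_compat _ _ HT HQ))).
  set (p := 1 - exp (- (T i j * Q i j))) in *.
  assert (p * (Rw i j - (w + f * Sp i j) / Q i j) <= p * X) by (apply Rmult_le_compat_l; lra).
  assert ((1 - p) * V j <= (1 - p) * X) by (apply Rmult_le_compat_l; lra).
  lra.
Qed.

Definition option_at (l : list nat) (i : nat) (o : action) : Prop :=
  o = (None, None) \/ o = (Some i, None) \/
  exists j, In j l /\ E i j /\ j <> i /\ o = (Some j, Some (T i j)).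

Lemma option_at_cons l c i o : option_at l i o -> option_at (c :: l) i o.
Proof.
  intros [H | [H | [j [Hj H]]]]; [now left | now right; left |].
  right; right. exists j. split; [now right | exact H].
Qed.

Lemma option_at_cons_inv l c i o : option_at (c :: l) i o ->
  option_at l i o \/ (E i c /\ c <> i /\ o = (Some c, Some (T i c))).
Proof.
  intros [H | [H | [j [[<- | Hj] H]]]]; [left; now left | left; now right; left | now right |].
  left; right; right. now exists j.
Qed.

Lemma option_at_target l i o j : option_at l i o -> fst o = Some j -> j <> i -> In j l.
Proof.
  intros [-> | [-> | [j' [Hj' [_ [_ ->]]]]]]; simpl; intros Hj Hne; congruence.
Qed.

Lemma option_at_wait l i o : option_at l i o -> fst o = Some i -> snd o = None.
Proof.
  intros [-> | [-> | [j [_ [_ [Hne ->]]]]]]; simpl; intros H; congruence.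
Qed.

Lemma option_at_trans_neq0 l i o y : option_at l i o -> trans Q i o (Some y) <> 0 ->
  fst o = Some y /\ y <> i.
Proof.
  intros [-> | [-> | [j [_ [_ [Hne ->]]]]]]; unfold trans, pm; simpl; intro H.
  - now contradiction H.
  - destruct (Nat.eq_dec y i); contradiction H; ring.
  - destruct (Nat.eq_dec y j) as [-> | ]; [auto | now contradiction H].
Qed.

Lemma option_at_adm l i o : (i < n)%nat -> option_at l i o -> adm E T i o.
Proof.
  intros Hi [-> | [-> | [j [_ [Hij [Hne ->]]]]]]; unfold adm; simpl; [exact I | |].
  - split; [auto|]. now destruct (Nat.eq_dec i i).
  - split; [exact Hij|]. now destruct (Nat.eq_dec j i).
Qed.

Lemma qfactor_option_ext l V1 V2 i o : option_at l i o -> (forall j, In j l -> V1 j = V2 j) ->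
  qf V1 i o = qf V2 i o.
Proof.
  intros [-> | [-> | [j [Hj [_ [_ ->]]]]]] HV; unfold qfactor; simpl; [ring | ring |].
  now rewrite HV.
Qed.

(* [rk i] is the number of nodes settled before [i]. *)
Record settled (l : list nat) (V : nat -> R) (mu : nat -> action) (rk : nat -> nat) : Prop := {
  settled_nodup : NoDup l;
  settled_lt : forall i, In i l -> (i < n)%nat;
  settled_option : forall i, In i l -> option_at l i (mu i);
  settled_value : forall i, In i l -> qf V i (mu i) = V i;
  settled_optimal : forall i o, In i l -> option_at l i o -> qf V i o <= V i;
  settled_rank_lt : forall i, In i l -> (rk i < length l)%nat;
  settled_rank_desc : forall i j, In i l -> fst (mu i) = Some j -> j <> i -> (rk j < rk i)%nat;
  settled_dominates : forall i c o, In i l -> (c < n)%nat -> ~ In c l -> option_at l c o ->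
    qf V c o <= V i }.

Lemma settled_nil V mu rk : settled nil V mu rk.
Proof. split; simpl; try tauto. constructor. Qed.

Section Extend.
Variables (l : list nat) (V : nat -> R) (mu : nat -> action) (rk : nat -> nat)
  (u : nat) (o : action).
Hypotheses (Hl : settled l V mu rk) (Hu : (u < n)%nat) (Hul : ~ In u l) (Ho : option_at l u o)
  (Hmax : forall c o', (c < n)%nat -> ~ In c l -> option_at l c o' -> qf V c o' <= qf V u o).

Let V' := update V u (qf V u o).

Lemma settled_value_unchanged j : In j l -> V' j = V j.
Proof. intros Hj. apply update_neq. congruence. Qed.

Lemma qfactor_unchanged i o' : option_at l i o' -> qf V' i o' = qf V i o'.
Proof. intros H. apply (qfactor_option_ext l); [exact H | exact settled_value_unchanged]. Qed.

Lemma new_value_wait_le c : (c < n)%nat -> ~ In c l -> wait_value c <= qf V u o.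
Proof.
  intros Hc Hcl. rewrite <- (qfactor_wait_forever V c). apply Hmax; auto. now right; left.
Qed.

Lemma new_value_le_settled i : In i l -> qf V u o <= V i.
Proof. intros Hi. now apply (settled_dominates _ _ _ _ Hl). Qed.

Lemma frontier_le_new_value c o' : (c < n)%nat -> ~ In c (u :: l) -> option_at (u :: l) c o' ->
  qf V' c o' <= qf V u o.
Proof.
  intros Hc Hcl Ho'. assert (Hcl' : ~ In c l) by (intro; apply Hcl; now right).
  apply option_at_cons_inv in Ho' as [Ho' | [Hcu [Hne ->]]].
  - rewrite qfactor_unchanged by exact Ho'. now apply Hmax.
  - apply qfactor_move_le; [exact Hcu | congruence | now apply new_value_wait_le
      | now apply new_value_wait_le | unfold V'; rewrite update_eq; lra].
Qed.

Lemma settled_optimal_after i o' : In i (u :: l) -> option_at (u :: l) i o' -> qf V' i o' <= V' i.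
Proof.
  intros [<- | Hi] Ho'; apply option_at_cons_inv in Ho' as [Ho' | [Hiu [Hne ->]]].
  - unfold V' at 2. rewrite update_eq, qfactor_unchanged by exact Ho'. now apply Hmax.
  - congruence.
  - rewrite qfactor_unchanged, settled_value_unchanged by assumption.
    now apply (settled_optimal _ _ _ _ Hl).
  - rewrite settled_value_unchanged by exact Hi.
    assert (Hwait : wait_value i <= V i).
    { rewrite <- (qfactor_wait_forever V i). apply (settled_optimal _ _ _ _ Hl); [exact Hi|].
      now right; left. }
    pose proof (new_value_le_settled i Hi).
    apply qfactor_move_le; [exact Hiu | congruence | exact Hwait
      | pose proof (new_value_wait_le u Hu Hul); lra | unfold V'; rewrite update_eq; lra].
Qed.

Lemma settled_extend : settled (u :: l) V' (update mu u o) (update rk u (length l)).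
Proof.
  assert (Hneq : forall i, In i l -> i <> u) by congruence.
  split.
  - constructor; [exact Hul | exact (settled_nodup _ _ _ _ Hl)].
  - intros i [<- | Hi]; [exact Hu | exact (settled_lt _ _ _ _ Hl i Hi)].
  - intros i [<- | Hi]; apply option_at_cons.
    + now rewrite update_eq.
    + rewrite update_neq by auto. exact (settled_option _ _ _ _ Hl i Hi).
  - intros i [<- | Hi].
    + rewrite update_eq, qfactor_unchanged by exact Ho. unfold V'. now rewrite update_eq.
    + rewrite update_neq, qfactor_unchanged, settled_value_unchanged
        by (auto; exact (settled_option _ _ _ _ Hl i Hi)).
      exact (settled_value _ _ _ _ Hl i Hi).
  - exact settled_optimal_after.
  - intros i [<- | Hi]; simpl.
    + rewrite update_eq. lia.
    + rewrite update_neq by auto. pose proof (settled_rank_lt _ _ _ _ Hl i Hi). lia.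
  - intros i j [<- | Hi] Hj Hji.
    + rewrite update_eq in Hj. rewrite update_eq.
      pose proof (option_at_target _ _ _ _ Ho Hj Hji) as Hjl.
      rewrite update_neq by auto. exact (settled_rank_lt _ _ _ _ Hl j Hjl).
    + rewrite update_neq in Hj by auto.
      pose proof (option_at_target _ _ _ _ (settled_option _ _ _ _ Hl i Hi) Hj Hji) as Hjl.
      rewrite !update_neq by auto. exact (settled_rank_desc _ _ _ _ Hl i j Hi Hj Hji).
  - intros i c o' Hi Hc Hcl Ho'. pose proof (frontier_le_new_value c o' Hc Hcl Ho').
    destruct Hi as [<- | Hi].
    + unfold V' at 2. rewrite update_eq. lra.
    + rewrite settled_value_unchanged by exact Hi. pose proof (new_value_le_settled i Hi). lra.
Qed.

End Extend.

Lemma settled_step l V mu rk : settled l V mu rk -> (exists c, (c < n)%nat /\ ~ In c l) ->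
  exists u V' mu' rk', settled (u :: l) V' mu' rk' /\ ~ In u l.
Proof.
  intros Hl [c [Hc Hcl]].
  set (candidates := flat_map (fun c => map (pair c)
         ((None, None) :: (Some c, None) :: map (fun j => (Some j, Some (T c j))) l)) (seq 0 n)).
  assert (Hcand : forall c o, (c < n)%nat -> option_at l c o -> In (c, o) candidates).
  { intros c' o Hc' Ho. apply in_flat_map. exists c'. split; [apply in_seq; lia|].
    apply in_map. destruct Ho as [-> | [-> | [j [Hj [_ [_ ->]]]]]]; [now left | now right; left |].
    right; right. exact (in_map (fun j => (Some j, Some (T c' j))) l j Hj). }
  destruct (exists_argmax_in
              (fun co => (fst co < n)%nat /\ ~ In (fst co) l /\ option_at l (fst co) (snd co))
              (fun co => qf V (fst co) (snd co)) candidates) as [[u o] [_ [[Hu [Hul Ho]] Hmax]]].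
  { exists (c, (None, None)). split; [apply Hcand; [exact Hc | now left] | simpl; auto].
    repeat split; [exact Hc | exact Hcl | now left]. }
  simpl in Hu, Hul, Ho.
  exists u, (update V u (qf V u o)), (update mu u o), (update rk u (length l)).
  split; [|exact Hul]. apply settled_extend; auto.
  intros c' o' Hc' Hc'l Ho'. exact (Hmax (c', o') (Hcand c' o' Hc' Ho') (conj Hc' (conj Hc'l Ho'))).
Qed.

Lemma settled_exists k : (k <= n)%nat -> exists l V mu rk, settled l V mu rk /\ length l = k.
Proof.
  induction k as [|k IH]; intros Hk.
  - exists nil, (fun _ => 0), (fun _ => (None, None)), (fun _ => O).
    split; [apply settled_nil | reflexivity].
  - destruct IH as [l [V [mu [rk [Hl Hlen]]]]]; [lia|].
    destruct (settled_step l V mu rk Hl) as [u [V' [mu' [rk' [Hl' _]]]]].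
    + apply NNPP. intro Hfull.
      assert (Hincl : incl (seq 0 n) l).
      { intros c Hc. apply in_seq in Hc. apply NNPP. intro Hcl.
        apply Hfull. exists c. split; [lia | exact Hcl]. }
      pose proof (NoDup_incl_length (seq_NoDup n 0) Hincl). rewrite length_seq in *. lia.
    + exists (u :: l), V', mu', rk'. split; [exact Hl' | simpl; lia].
Qed.

Lemma settled_complete : exists l V mu rk,
  settled l V mu rk /\ length l = n /\ forall i, (i < n)%nat -> In i l.
Proof.
  destruct (settled_exists n (le_n n)) as [l [V [mu [rk [Hl Hlen]]]]].
  exists l, V, mu, rk. split; [exact Hl | split; [exact Hlen |]].
  intros i Hi. apply (@NoDup_length_incl nat l (seq 0 n) (settled_nodup _ _ _ _ Hl)).
  - now rewrite length_seq, Hlen.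
  - intros x Hx. apply in_seq. pose proof (settled_lt _ _ _ _ Hl x Hx). lia.
  - apply in_seq. lia.
Qed.

Section Complete.
Variables (l : list nat) (V : nat -> R) (mu : nat -> action) (rk : nat -> nat).
Hypotheses (Hl : settled l V mu rk) (Hall : forall i, (i < n)%nat -> In i l).

Lemma complete_admissible : admissible n E T (stat mu).
Proof.
  intros k i Hi. apply (option_at_adm l); [exact Hi|].
  exact (settled_option _ _ _ _ Hl i (Hall i Hi)).
Qed.

Lemma complete_superharmonic i u : (i < n)%nat -> adm E T i u -> qf V i u <= V i.
Proof.
  intros Hi Hu. apply Hall in Hi as Hil.
  destruct u as [[j|] t]; unfold adm in Hu; simpl in Hu.
  - destruct Hu as [Hij Ht]. destruct (Nat.eq_dec j i) as [-> | Hne].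
    + destruct t as [t|].
      * apply qfactor_finite_wait_le; [exact Hi | exact Ht |].
        rewrite <- (qfactor_wait_forever V i). apply (settled_optimal _ _ _ _ Hl); [exact Hil|].
        now right; left.
      * apply (settled_optimal _ _ _ _ Hl); [exact Hil|]. now right; left.
    + subst t. apply (settled_optimal _ _ _ _ Hl); [exact Hil|]. right; right.
      exists j. repeat split; auto. apply Hall, (hE_dom i j Hij).
  - rewrite qfactor_quit, <- (qfactor_quit w f Q Rw Sp V i None).
    apply (settled_optimal _ _ _ _ Hl); [exact Hil|]. now left.
Qed.

Lemma complete_rank_desc i y : (i < n)%nat -> trans Q i (mu i) (Some y) <> 0 -> (rk y < rk i)%nat.
Proof.
  intros Hi Ht. apply Hall in Hi.
  destruct (option_at_trans_neq0 l i (mu i) y (settled_option _ _ _ _ Hl i Hi) Ht) as [Hy Hne].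
  exact (settled_rank_desc _ _ _ _ Hl i y Hi Hy Hne).
Qed.

End Complete.

Theorem exists_acyclic_bellman_policy : exists V mu rk,
  admissible n E T (stat mu) /\
  (forall i, (i < n)%nat -> qf V i (mu i) = V i) /\
  (forall i u, (i < n)%nat -> adm E T i u -> qf V i u <= V i) /\
  (forall i, (i < n)%nat -> fst (mu i) = Some i -> snd (mu i) = None) /\
  (forall i, (i < n)%nat -> (rk i < n)%nat) /\
  (forall i y, (i < n)%nat -> trans Q i (mu i) (Some y) <> 0 -> (rk y < rk i)%nat).
Proof.
  destruct settled_complete as (l & V & mu & rk & Hl & Hlen & Hall).
  exists V, mu, rk. repeat split.
  - exact (complete_admissible l V mu rk Hl Hall).
  - intros i Hi. exact (settled_value _ _ _ _ Hl i (Hall i Hi)).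
  - exact (complete_superharmonic l V mu rk Hl Hall).
  - intros i Hi. exact (option_at_wait l i (mu i) (settled_option _ _ _ _ Hl i (Hall i Hi))).
  - intros i Hi. rewrite <- Hlen. exact (settled_rank_lt _ _ _ _ Hl i (Hall i Hi)).
  - exact (complete_rank_desc l V mu rk Hl Hall).
Qed.

End Construction.

Theorem proposition2
  (n : nat) (E : nat -> nat -> Prop) (w f : R) (Q Rw T S : nat -> nat -> R)
  (hE_dom : forall i j, E i j -> (i < n)%nat /\ (j < n)%nat)
  (hE_loop : forall i, (i < n)%nat -> E i i)
  (hE_conn : forall i j, (i < n)%nat -> (j < n)%nat ->
              clos_refl_sym_trans nat E i j)
  (hw : 0 < w) (hf : 0 < f)
  (hQ : forall i j, E i j -> 0 < Q i j)
  (hR : forall i j, E i j -> 0 < Rw i j)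
  (hT : forall i j, E i j -> i <> j -> 0 < T i j)
  (hS : forall i j, E i j -> i <> j -> 0 < S i j)
  (hSloop : forall i, (i < n)%nat -> S i i = 0)
  (hstand : forall j k, E j k -> j <> k ->
     Rw j k - w / Q j k <= Rmax (Rw j j - w / Q j j) (Rw k k - w / Q k k)) :
  exists mu : nat -> action,
    optimal_stationary n E w f Q Rw T S mu /\
    (forall i, (i < n)%nat -> fst (mu i) = Some i -> snd (mu i) = None) /\
    (forall x0 i k k', (x0 < n)%nat -> (i < n)%nat -> k <> k' ->
       prob_both n Q (stat mu) x0 i k k' = 0) /\
    (forall x0 i, (x0 < n)%nat -> (i < n)%nat -> state_dist n Q (stat mu) x0 n (Some i) = 0).
Proof.
  destruct (exists_acyclic_bellman_policy n E w f Q Rw T S hE_dom hE_loop hf hQ hT hS hSloop hstand)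
    as (V & mu & rk & Hadm & Hharm & Hsup & Hwait & Hrk & Hdesc).
  assert (Hvanish : forall x0 K i, (x0 < n)%nat -> (n <= K)%nat ->
            state_dist n Q (stat mu) x0 K (Some i) = 0).
  { intros x0 K i Hx HK. apply (state_dist_vanishes n Q mu rk Hdesc).
    specialize (Hrk x0 Hx). lia. }
  exists mu. split.
  { exact (optimal_of_bellman n E w f Q Rw T S hE_dom V mu Hadm Hharm Hsup Hvanish). }
  split; [exact Hwait|]. split.
  - intros x0 i k k' _ _ Hkk. exact (prob_both_eq0 n Q mu rk Hdesc x0 i k k' Hkk).
  - intros x0 i Hx _. exact (Hvanish x0 n i Hx (le_n n)).
Qed.
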